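(* Let $\mathbb{X}$ be a Banach space and $\delta>0$. Suppose $V\subset\mathbb{X}$ is a $\delta$-separated set with $\#V\geq2$ and there exist a line $L$ and a number $0\leq\alpha<1/6$ with $\mathrm{dist}(v,L)\leq\alpha\delta$ for all $v\in V$. Let $\pi$ be a metric projection onto $L$, identify $L$ with $\mathbb{R}$ via an affine isometry, and enumerate $V=\{v_1,\dots,v_n\}$ so that $\pi(v_1)<\pi(v_2)<\dots<\pi(v_n)$. Then $$\sum_{i=1}^{n-1}|v_{i+1}-v_i|^s\leq(1+3\alpha)^{2s}|v_1-v_n|^s\quad\text{for all }s\in[1,\infty).$$
   Context: All Banach spaces are real; a line is a one-dimensional affine subspace. $V$ is $\delta$-separated if $|v-w|\geq\delta$ for all distinct $v,w\in V$. A metric projection onto $L$ is any map $\pi:\mathbb{X}\to L$ with $|x-\pi(x)|=\mathrm{dist}(x,L)$ for all $x$. (Under these hypotheses the points $\pi(v)$, $v\in V$, are distinct.) *)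

From Stdlib Require Import Reals List.
Open Scope R_scope.

Record Banach := {
  carrier :> Type;
  vadd : carrier -> carrier -> carrier;
  vscal : R -> carrier -> carrier;
  vzero : carrier;
  vopp : carrier -> carrier;
  vnorm : carrier -> R;
  vadd_assoc : forall x y z, vadd x (vadd y z) = vadd (vadd x y) z;
  vadd_comm : forall x y, vadd x y = vadd y x;
  vadd_zero : forall x, vadd x vzero = x;
  vadd_opp : forall x, vadd x (vopp x) = vzero;
  vscal_one : forall x, vscal 1 x = x;
  vscal_assoc : forall a b x, vscal a (vscal b x) = vscal (a * b) x;
  vscal_distr_v : forall a x y, vscal a (vadd x y) = vadd (vscal a x) (vscal a y);
  vscal_distr_s : forall a b x, vscal (a + b) x = vadd (vscal a x) (vscal b x);
  vnorm_eq0 : forall x, vnorm x = 0 -> x = vzero;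
  vnorm_scal : forall a x, vnorm (vscal a x) = Rabs a * vnorm x;
  vnorm_triangle : forall x y, vnorm (vadd x y) <= vnorm x + vnorm y;
  complete : forall u : nat -> carrier,
    (forall eps, eps > 0 -> exists N, forall m n, (m >= N)%nat -> (n >= N)%nat ->
        vnorm (vadd (u m) (vopp (u n))) < eps) ->
    exists l, forall eps, eps > 0 -> exists N, forall n, (n >= N)%nat ->
        vnorm (vadd (u n) (vopp l)) < eps
}.

Arguments vadd {_} _ _. Arguments vscal {_} _ _. Arguments vopp {_} _. Arguments vnorm {_} _.

Definition vsub {X : Banach} (x y : X) : X := vadd x (vopp y).

Definition vdist {X : Banach} (x y : X) : R := vnorm (vsub x y).

(** For [vnorm d = 1], [t |-> line_pt p d t] is an affine isometry R -> L,
    and every line L admits such a parametrisation. *)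
Definition line_pt {X : Banach} (p d : X) (t : R) : X := vadd p (vscal t d).

Definition is_dist_line {X : Banach} (p d x : X) (r : R) : Prop :=
  (forall t, r <= vdist x (line_pt p d t)) /\
  (forall r', (forall t, r' <= vdist x (line_pt p d t)) -> r' <= r).

Fixpoint chain_sum {X : Type} (f : X -> X -> R) (l : list X) : R :=
  match l with
  | a :: ((b :: _) as t) => f a b + chain_sum f t
  | _ => 0
  end.

From Stdlib Require Import Reals List Sorted Lra Lia.
Open Scope R_scope.

(* Two points whose projections are t apart are at distance
   t up to an error 2 alpha delta, so consecutive projections are at least
   (1 - 2 alpha) delta apart; summing, the length of the chain exceeds
   pi(v_n) - pi(v_1) by at most a factor 1/(1 - 2 alpha), while |v_1 - v_n|
   falls short of it by at most 2 alpha delta, a relative error of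
   alpha/(1 - 2 alpha) once n >= 3.  Hence the chain is at most
   (1 + 3 alpha)^2 |v_1 - v_n| long, and superadditivity of x |-> x^s for
   s >= 1 bounds the sum of s-th powers by the s-th power of the length. *)

Section VectorFacts.
Variable X : Banach.
Implicit Types x y z a b c e : X.

Lemma vadd_zero_l x : vadd (vzero X) x = x.
Proof. rewrite vadd_comm; apply vadd_zero. Qed.

Lemma vadd_cancel_l x y z : vadd x y = vadd x z -> y = z.
Proof.
  intro H.
  assert (oppK_l : forall w, vadd (vopp x) (vadd x w) = w).
  { intro w. rewrite vadd_assoc, (vadd_comm _ (vopp x) x), vadd_opp. apply vadd_zero_l. }
  rewrite <- (oppK_l y), <- (oppK_l z), H; reflexivity.
Qed.

Lemma vscal_zero x : vscal 0 x = vzero X.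
Proof.
  apply (vadd_cancel_l (vscal 0 x)). rewrite vadd_zero, <- vscal_distr_s.
  now replace (0 + 0) with 0 by ring.
Qed.

Lemma vopp_scal x : vopp x = vscal (-1) x.
Proof.
  apply (vadd_cancel_l x). rewrite vadd_opp.
  rewrite <- (vscal_one _ x) at 1. rewrite <- vscal_distr_s.
  replace (1 + -1) with 0 by ring. now rewrite vscal_zero.
Qed.

Lemma vopp_add x y : vopp (vadd x y) = vadd (vopp x) (vopp y).
Proof. rewrite !vopp_scal. apply vscal_distr_v. Qed.

Lemma vopp_opp x : vopp (vopp x) = x.
Proof. rewrite !vopp_scal, vscal_assoc. replace (-1 * -1) with 1 by ring. apply vscal_one. Qed.

Lemma vadd_ACA a b c e : vadd (vadd a b) (vadd c e) = vadd (vadd a c) (vadd b e).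
Proof.
  rewrite <- !vadd_assoc. f_equal. rewrite !vadd_assoc. f_equal. apply vadd_comm.
Qed.

Lemma vnorm_opp x : vnorm (vopp x) = vnorm x.
Proof. rewrite vopp_scal, vnorm_scal, Rabs_left by lra. ring. Qed.

Lemma vnorm_zero : vnorm (vzero X) = 0.
Proof. rewrite <- (vscal_zero (vzero X)), vnorm_scal, Rabs_R0; ring. Qed.

Lemma vnorm_ge0 x : 0 <= vnorm x.
Proof.
  pose proof (vnorm_triangle _ x (vopp x)) as H.
  rewrite vadd_opp, vnorm_zero, vnorm_opp in H. lra.
Qed.

Lemma vdist_ge0 x y : 0 <= vdist x y.
Proof. apply vnorm_ge0. Qed.

Lemma vdist_sym x y : vdist x y = vdist y x.
Proof.
  unfold vdist, vsub. rewrite <- vnorm_opp, vopp_add, vopp_opp, vadd_comm. reflexivity.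
Qed.

Lemma vdist_triangle x y z : vdist x z <= vdist x y + vdist y z.
Proof.
  unfold vdist, vsub.
  replace (vadd x (vopp z)) with (vadd (vadd x (vopp y)) (vadd y (vopp z))).
  - apply vnorm_triangle.
  - rewrite <- (vadd_assoc _ x), (vadd_assoc _ (vopp y)), (vadd_comm _ (vopp y) y),
      vadd_opp, vadd_zero_l.
    reflexivity.
Qed.

Lemma vdist_line_pt (p d : X) s t :
  vnorm d = 1 -> vdist (line_pt p d s) (line_pt p d t) = Rabs (s - t).
Proof.
  intro Hd. unfold vdist, vsub, line_pt.
  rewrite vopp_add, vadd_ACA, vadd_opp, vadd_zero_l, (vopp_scal (vscal t d)), vscal_assoc,
    <- vscal_distr_s, vnorm_scal, Hd, Rmult_1_r.
  f_equal; ring.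
Qed.

Lemma vdist_perturb a b a' b' r :
  vdist a a' <= r -> vdist b b' <= r ->
  vdist a b <= vdist a' b' + 2 * r /\ vdist a' b' <= vdist a b + 2 * r.
Proof.
  intros Ha Hb.
  pose proof (vdist_triangle a a' b). pose proof (vdist_triangle a' b' b).
  pose proof (vdist_triangle a' a b'). pose proof (vdist_triangle a b b').
  rewrite (vdist_sym b' b), (vdist_sym a' a) in *.
  split; lra.
Qed.

Lemma is_dist_line_exists (p d x : X) : exists r, is_dist_line p d x r.
Proof.
  (* Stdlib's completeness yields suprema only, so take minus the sup of minus the distances. *)
  set (E := fun r => exists t, r = - vdist x (line_pt p d t)).
  assert (E_bounded : bound E).
  { exists 0. intros r [t ->]. pose proof (vdist_ge0 x (line_pt p d t)). lra. }
  assert (E_inhabited : exists r, E r) by (exists (- vdist x (line_pt p d 0)); exists 0; reflexivity).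
  destruct (completeness E E_bounded E_inhabited) as [m [Hub Hlub]].
  exists (- m). split.
  - intro t. assert (Ht : E (- vdist x (line_pt p d t))) by (exists t; reflexivity).
    specialize (Hub _ Ht). lra.
  - intros r' Hr'. assert (m <= - r'). { apply Hlub. intros r [t ->]. specialize (Hr' t). lra. }
    lra.
Qed.

End VectorFacts.

Lemma last_In {T : Type} (l : list T) x0 : l <> nil -> In (last l x0) l.
Proof.
  intro Hl. rewrite (app_removelast_last x0 Hl) at 2.
  apply in_or_app. right. left. reflexivity.
Qed.

Lemma length_ge2_cons2 {T : Type} (l : list T) :
  (2 <= length l)%nat -> exists a b t, l = a :: b :: t.
Proof. destruct l as [|a [|b t]]; simpl; intro Hl; [lia | lia | eauto]. Qed.

Section ChainSum.
Variables (T : Type) (q : T -> R).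
Implicit Types (f g : T -> T -> R) (l : list T).

Lemma chain_sum_cons2 f a b l : chain_sum f (a :: b :: l) = f a b + chain_sum f (b :: l).
Proof. reflexivity. Qed.

Lemma chain_sum_add f g l :
  chain_sum (fun a b => f a b + g a b) l = chain_sum f l + chain_sum g l.
Proof.
  induction l as [|a [|b l] IH]; [simpl; ring | simpl; ring|].
  rewrite !chain_sum_cons2, IH. ring.
Qed.

Lemma chain_sum_const c l : chain_sum (fun _ _ => c) l = c * INR (pred (length l)).
Proof.
  induction l as [|a [|b l] IH]; [simpl; ring | simpl; ring|].
  rewrite chain_sum_cons2, IH. simpl pred. rewrite (S_INR (length l)). ring.
Qed.

Lemma chain_sum_telescope l x0 :
  chain_sum (fun a b => q b - q a) l = q (last l x0) - q (hd x0 l).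
Proof.
  induction l as [|a [|b l] IH]; [simpl; ring | simpl; ring|].
  rewrite chain_sum_cons2, IH. simpl. ring.
Qed.

Lemma chain_sum_le_sorted f g l :
  StronglySorted (fun a b => q a < q b) l ->
  (forall a b, In a l -> In b l -> q a < q b -> f a b <= g a b) ->
  chain_sum f l <= chain_sum g l.
Proof.
  induction l as [|a [|b l] IH]; intros Hl Hfg; [simpl; lra | simpl; lra|].
  inversion Hl as [|? ? Hl' Hab]; subst.
  rewrite !chain_sum_cons2.
  pose proof (Hfg a b (or_introl eq_refl) (or_intror (or_introl eq_refl)) (Forall_inv Hab)).
  assert (chain_sum f (b :: l) <= chain_sum g (b :: l)).
  { apply IH; [exact Hl'|]. intros x y Hx Hy. apply Hfg; right; assumption. }
  lra.
Qed.

Lemma chain_sum_gt0 g a b l :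
  StronglySorted (fun a b => q a < q b) (a :: b :: l) ->
  (forall x y, In x (a :: b :: l) -> In y (a :: b :: l) -> q x < q y -> 0 < g x y) ->
  0 < chain_sum g (a :: b :: l).
Proof.
  intros Hl Hg. apply Rlt_le_trans with (g a b).
  - inversion Hl as [|? ? _ Hab]; subst.
    apply Hg; [left | right; left | apply (Forall_inv Hab)]; reflexivity.
  - rewrite chain_sum_cons2. inversion Hl; subst.
    assert (0 <= chain_sum g (b :: l)).
    { rewrite <- (Rmult_0_l (INR (pred (length (b :: l))))), <- chain_sum_const.
      apply chain_sum_le_sorted; [assumption|].
      intros x y Hx Hy Hxy. apply Rlt_le, Hg; [right | right |]; assumption. }
    lra.
Qed.

End ChainSum.

Lemma Rpower_superadditive a b s :
  0 < a -> 0 < b -> 1 <= s -> Rpower a s + Rpower b s <= Rpower (a + b) s.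
Proof.
  intros Ha Hb Hs.
  assert (split_one : forall x, 0 < x -> Rpower x s = x * Rpower x (s - 1)).
  { intros x Hx. replace s with (1 + (s - 1)) at 1 by ring.
    rewrite Rpower_plus, Rpower_1 by lra. reflexivity. }
  rewrite !split_one by lra.
  assert (Rpower a (s - 1) <= Rpower (a + b) (s - 1)) by (apply Rle_Rpower_l; lra).
  assert (Rpower b (s - 1) <= Rpower (a + b) (s - 1)) by (apply Rle_Rpower_l; lra).
  nra.
Qed.

Lemma chain_sum_Rpower_le {T : Type} (q : T -> R) (g : T -> T -> R) s l :
  1 <= s ->
  StronglySorted (fun a b => q a < q b) l ->
  (forall a b, In a l -> In b l -> q a < q b -> 0 < g a b) ->
  chain_sum (fun a b => Rpower (g a b) s) l <= Rpower (chain_sum g l) s.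
Proof.
  intros Hs. induction l as [|a [|b l] IH]; intros Hl Hg.
  1, 2: simpl; apply Rlt_le, exp_pos.
  rewrite !chain_sum_cons2.
  inversion Hl as [|? ? Hl' Hab]; subst.
  assert (Hg' : forall x y, In x (b :: l) -> In y (b :: l) -> q x < q y -> 0 < g x y)
    by (intros x y Hx Hy; apply Hg; right; assumption).
  assert (0 < g a b)
    by (apply Hg; [left | right; left | apply (Forall_inv Hab)]; reflexivity).
  destruct l as [|c l].
  - simpl. rewrite !Rplus_0_r. lra.
  - pose proof (IH Hl' Hg').
    pose proof (chain_sum_gt0 T q g b c l Hl' Hg').
    pose proof (Rpower_superadditive (g a b) (chain_sum g (b :: c :: l)) s).
    lra.
Qed.

Lemma Rpower_pow_base x n s : 0 < x -> Rpower (x ^ n) s = Rpower x (INR n * s).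
Proof. intro Hx. rewrite <- Rpower_pow, Rpower_mult by exact Hx. reflexivity. Qed.

(* With [c = 2 alpha delta]: [A] is the chain length over [m >= 2] links, [T] the
   extent of the projections, [E] the distance between the endpoints. *)
Lemma perturbed_chain_bound alpha delta m T A E :
  0 < delta -> 0 <= alpha < 1 / 6 -> 2 <= m -> 0 <= A ->
  A <= T + 2 * alpha * delta * m ->
  m * ((1 - 2 * alpha) * delta) <= T ->
  T - 2 * alpha * delta <= E ->
  A <= (1 + 3 * alpha) ^ 2 * E.
Proof.
  intros Hd Ha Hm HA HAT HmT HTE.
  assert (Hlen : (1 - 2 * alpha) * A <= T).
  { assert (2 * alpha * (m * ((1 - 2 * alpha) * delta)) <= 2 * alpha * T)
      by (apply Rmult_le_compat_l; lra).
    nra. }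
  assert (Hend : (1 - 3 * alpha) * T <= (1 - 2 * alpha) * E).
  { assert (2 * ((1 - 2 * alpha) * delta) <= m * ((1 - 2 * alpha) * delta))
      by (apply Rmult_le_compat_r; nra).
    assert (alpha * (2 * ((1 - 2 * alpha) * delta)) <= alpha * T)
      by (apply Rmult_le_compat_l; lra).
    nra. }
  assert (HAE : (1 - 3 * alpha) * A <= E).
  { apply Rmult_le_reg_l with (1 - 2 * alpha); [lra|].
    assert ((1 - 3 * alpha) * ((1 - 2 * alpha) * A) <= (1 - 3 * alpha) * T)
      by (apply Rmult_le_compat_l; lra).
    nra. }
  assert (Hfactor : 1 <= (1 + 3 * alpha) ^ 2 * (1 - 3 * alpha)) by nra.
  assert ((1 + 3 * alpha) ^ 2 * ((1 - 3 * alpha) * A) <= (1 + 3 * alpha) ^ 2 * E)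
    by (apply Rmult_le_compat_l; nra).
  nra.
Qed.

Section NearlyCollinearChain.
Variables (X : Banach) (p d : X) (pic : X -> R) (delta alpha : R) (vs : list X).
Hypothesis delta_gt0 : 0 < delta.
Hypothesis alpha_bounds : 0 <= alpha < 1 / 6.
Hypothesis d_unit : vnorm d = 1.
Hypothesis vs_separated : forall v w, In v vs -> In w vs -> v <> w -> vdist v w >= delta.
Hypothesis vs_near_line : forall v, In v vs -> vdist v (line_pt p d (pic v)) <= alpha * delta.
Hypothesis vs_sorted : StronglySorted (fun v w => pic v < pic w) vs.

Lemma vdist_proj_gap a b : In a vs -> In b vs ->
  vdist a b <= Rabs (pic b - pic a) + 2 * alpha * delta /\
  Rabs (pic b - pic a) <= vdist a b + 2 * alpha * delta.
Proof.
  intros Ha Hb.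
  rewrite Rabs_minus_sym, <- (vdist_line_pt X p d (pic a) (pic b) d_unit).
  destruct (vdist_perturb X a b _ _ _ (vs_near_line a Ha) (vs_near_line b Hb)).
  split; lra.
Qed.

Lemma link_gt0 a b : In a vs -> In b vs -> pic a < pic b -> 0 < vdist b a.
Proof.
  intros Ha Hb Hab.
  assert (b <> a) by (intros ->; lra).
  pose proof (vs_separated b a Hb Ha H). lra.
Qed.

Lemma link_le_gap a b : In a vs -> In b vs -> pic a < pic b ->
  vdist b a <= (pic b - pic a) + 2 * alpha * delta.
Proof.
  intros Ha Hb Hab. rewrite vdist_sym.
  destruct (vdist_proj_gap a b Ha Hb) as [H _]. rewrite Rabs_right in H by lra. exact H.
Qed.

Lemma gap_ge_separation a b : In a vs -> In b vs -> pic a < pic b ->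
  (1 - 2 * alpha) * delta <= pic b - pic a.
Proof.
  intros Ha Hb Hab.
  assert (a <> b) by (intros ->; lra).
  pose proof (vs_separated a b Ha Hb H).
  destruct (vdist_proj_gap a b Ha Hb) as [Hgap _]. rewrite Rabs_right in Hgap by lra. lra.
Qed.

Lemma chain_length_gt0 : (2 <= length vs)%nat -> 0 < chain_sum (fun a b => vdist b a) vs.
Proof.
  intro Hlen.
  destruct (length_ge2_cons2 vs Hlen) as (h & w & t & Evs). rewrite Evs.
  apply (chain_sum_gt0 X pic); rewrite <- Evs; [exact vs_sorted | exact link_gt0].
Qed.

Lemma chain_length_le v0 : (2 <= length vs)%nat ->
  chain_sum (fun a b => vdist b a) vs <= (1 + 3 * alpha) ^ 2 * vdist (hd v0 vs) (last vs v0).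
Proof.
  intro Hlen.
  assert (Hfactor : 1 <= (1 + 3 * alpha) ^ 2) by nra.
  destruct (length_ge2_cons2 vs Hlen) as (h & w & [|u t] & Evs).
  { rewrite Evs. simpl. rewrite Rplus_0_r, vdist_sym. pose proof (vdist_ge0 X h w). nra. }
  set (m := INR (pred (length vs))).
  assert (Hm : 2 <= m).
  { unfold m. rewrite Evs. simpl pred. simpl length. rewrite !S_INR.
    pose proof (pos_INR (length t)). lra. }
  assert (HA : chain_sum (fun a b => vdist b a) vs
               <= pic (last vs v0) - pic (hd v0 vs) + 2 * alpha * delta * m).
  { replace (pic (last vs v0) - pic (hd v0 vs) + 2 * alpha * delta * m)
      with (chain_sum (fun a b => (pic b - pic a) + 2 * alpha * delta) vs)
      by (rewrite chain_sum_add, (chain_sum_telescope X pic vs v0), chain_sum_const; reflexivity).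
    apply (chain_sum_le_sorted X pic); [exact vs_sorted | exact link_le_gap]. }
  assert (HmT : m * ((1 - 2 * alpha) * delta) <= pic (last vs v0) - pic (hd v0 vs)).
  { replace (m * ((1 - 2 * alpha) * delta)) with (chain_sum (fun _ _ => (1 - 2 * alpha) * delta) vs)
      by (rewrite chain_sum_const; unfold m; ring).
    rewrite <- (chain_sum_telescope X pic vs v0).
    apply (chain_sum_le_sorted X pic); [exact vs_sorted | exact gap_ge_separation]. }
  assert (HTE : pic (last vs v0) - pic (hd v0 vs) - 2 * alpha * delta
                <= vdist (hd v0 vs) (last vs v0)).
  { assert (Hnil : vs <> nil) by (rewrite Evs; discriminate).
    assert (Hhd : In (hd v0 vs) vs) by (rewrite Evs; left; reflexivity).
    destruct (vdist_proj_gap _ _ Hhd (last_In vs v0 Hnil)) as [_ H].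
    pose proof (Rle_abs (pic (last vs v0) - pic (hd v0 vs))). lra. }
  pose proof (chain_length_gt0 Hlen).
  apply (perturbed_chain_bound alpha delta m (pic (last vs v0) - pic (hd v0 vs))); lra.
Qed.

End NearlyCollinearChain.

Theorem mainTheorem11 (X : Banach) (delta alpha : R) (vs : list X)
  (p d : X) (pic : X -> R) :
  delta > 0 ->
  NoDup vs ->
  (2 <= length vs)%nat ->
  (forall v w, In v vs -> In w vs -> v <> w -> vdist v w >= delta) ->
  vnorm d = 1 ->
  0 <= alpha < 1 / 6 ->
  (forall v r, In v vs -> is_dist_line p d v r -> r <= alpha * delta) ->
  (forall x r, is_dist_line p d x r -> vdist x (line_pt p d (pic x)) = r) ->
  StronglySorted (fun v w => pic v < pic w) vs ->
  forall (v0 : X) (s : R), 1 <= s ->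
    chain_sum (fun a b => Rpower (vdist b a) s) vs
      <= Rpower (1 + 3 * alpha) (2 * s) * Rpower (vdist (hd v0 vs) (last vs v0)) s.
Proof.
  intros Hdelta _ Hlen Hsep Hd Halpha Hdist Hpi Hsorted v0 s Hs.
  assert (Hnear : forall v, In v vs -> vdist v (line_pt p d (pic v)) <= alpha * delta).
  { intros v Hv. destruct (is_dist_line_exists X p d v) as [r Hr].
    rewrite (Hpi v r Hr). exact (Hdist v r Hv Hr). }
  pose proof (chain_length_gt0 X pic delta vs Hdelta Hsep Hsorted Hlen) as Hpos.
  pose proof (chain_length_le X p d pic delta alpha vs Hdelta Halpha Hd Hsep Hnear Hsorted v0 Hlen)
    as Hchain.
  assert (Hend : 0 < vdist (hd v0 vs) (last vs v0)).
  { pose proof (vdist_ge0 X (hd v0 vs) (last vs v0)). nra. }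
  eapply Rle_trans.
  { apply (chain_sum_Rpower_le pic); [exact Hs | exact Hsorted | exact (link_gt0 X pic delta vs Hdelta Hsep)]. }
  eapply Rle_trans.
  { apply Rle_Rpower_l; [lra | split; [exact Hpos | exact Hchain]]. }
  rewrite <- Rpower_mult_distr, Rpower_pow_base by nra.
  replace (INR 2 * s) with (2 * s) by (simpl; ring).
  lra.
Qed.
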